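(* Let $a\ge3$ be an integer. In the graded cluster algebra $\mathcal{A}\Big((x_1,x_2,x_3),\begin{pmatrix}0&a&-2\\-a&0&a\\2&-a&0\end{pmatrix},(a,2,a)\Big)$ there are infinitely many degrees each of which is the degree of infinitely many distinct cluster variables.
   Context: Graded cluster algebras: for a $3\times3$ skew-symmetric integer matrix $B=(b_{ij})$, $\mu_k(B)=(b'_{ij})$ with $b'_{ij}=-b_{ij}$ if $i=k$ or $j=k$, $b'_{ij}=b_{ij}+\operatorname{sgn}(b_{ik})\max(b_{ik}b_{kj},0)$ otherwise. A seed $((x_1,x_2,x_3),B)$ mutates in direction $k$ to $(x',\mu_k B)$ with $x'_j=x_j$ ($j\ne k$), $x'_k=\big(\prod_{b_{ik}>0}x_i^{b_{ik}}+\prod_{b_{ik}<0}x_i^{-b_{ik}}\big)/x_k$. Cluster variables are all entries of reachable clusters; $\mathcal{A}(x,B,g)$ is graded by $\deg x_i=g_i$ where $Bg=0$; under mutation at $k$ the degree vector becomes $g'$ with $g'_j=g_j$ ($j\ne k$), $g'_k=-g_k+\sum_{b_{ik}>0}b_{ik}g_i$; every cluster variable is homogeneous. *)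

From HB Require Import structures.
From mathcomp Require Import all_boot all_order all_algebra.
From mathcomp Require Import fraction.
From mathcomp Require Import mpoly.
Set Implicit Arguments.
Unset Strict Implicit.
Unset Printing Implicit Defensive.
Import Order.TTheory GRing.Theory Num.Theory.
Local Open Scope ring_scope.

Definition QX := {fraction {mpoly rat[3]}}.

Definition exmat := 'I_3 -> 'I_3 -> int.

Definition mut_mat (k : 'I_3) (B : exmat) : exmat :=
  fun i j =>
    if (i == k) || (j == k) then - B i j
    else B i j + sgz (B i k) * Num.max (B i k * B k j) 0.

Record gseed := GSeed {
  gs_x : 'I_3 -> QX;
  gs_B : exmat;
  gs_g : 'I_3 -> int }.

Definition mut_seed (k : 'I_3) (s : gseed) : gseed :=
  let B := gs_B s in
  let x := gs_x s in
  let g := gs_g s in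
  GSeed
    (fun j => if j == k then
        ((\prod_(i < 3 | 0 < B i k) x i ^+ `|B i k|%N)
         + (\prod_(i < 3 | B i k < 0) x i ^+ `|B i k|%N)) / x k
      else x j)
    (mut_mat k B)
    (fun j => if j == k then
        - g k + \sum_(i < 3 | 0 < B i k) B i k * g i
      else g j).

Definition mut_seq (ks : seq 'I_3) (s : gseed) : gseed :=
  foldl (fun t k => mut_seed k t) s ks.

(* z is a cluster variable of A(s) of degree d (degrees tracked along mutation;
   all cluster variables are homogeneous, so this is the degree of z) *)
Definition clvar_of_deg (s : gseed) (z : QX) (d : int) : Prop :=
  exists (ks : seq 'I_3) (i : 'I_3),
    gs_x (mut_seq ks s) i = z /\ gs_g (mut_seq ks s) i = d.

Definition xinit : 'I_3 -> QX := fun i => tofrac ('X_i : {mpoly rat[3]}).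

Definition Bmat (a : nat) : exmat :=
  fun i j =>
    match nat_of_ord i, nat_of_ord j with
    | 0, 1 => a%:Z | 0, 2 => -2 | 1, 0 => - a%:Z | 1, 2 => a%:Z
    | 2, 0 => 2 | 2, 1 => - a%:Z | _, _ => 0 end.

Definition gvec (a : nat) : 'I_3 -> int :=
  fun i => match nat_of_ord i with 1 => 2 | _ => a%:Z end.

Definition seed0 (a : nat) : gseed := GSeed xinit (Bmat a) (gvec a).

(* Along suitable mutation paths every seed has exchange matrix
   +-C(w), where C(w) is the cyclic skew-symmetric matrix with
   b_{i,i+1} = w_{i+2}, and degree vector w itself; mutation at k replaces
   w_k by w_{k+1} w_{k+2} - w_k.  Alternating mutations at 3 and 1 keep
   w = (a,2,a) and raise the x_1-degree of the cluster variables; after n such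
   rounds, alternating mutations at 2 and 1 produce cluster variables whose
   degrees run through the Lucas sequence V_{j+1}(a), strictly increasing for
   a >= 3 and independent of n.  Variables with the same j and different n are
   told apart by their degree (2n+1) U_{j+1}(a) in x_1 after setting
   x_2 = x_3 = 1, which the subtraction-free exchange relations let us compute
   in the tropical semifield (max, +). *)

From HB Require Import structures.
From mathcomp Require Import all_boot all_order all_algebra.
From mathcomp Require Import fraction mpoly.
From mathcomp Require Import zify.
Import Order.TTheory GRing.Theory Num.Theory.
Set Implicit Arguments.
Unset Strict Implicit.
Local Open Scope ring_scope.

Section PositivePolynomials.
Variable R : numDomainType.
Implicit Types P Q : {poly R}.

Lemma lead_coef_gt0_neq0 P : 0 < lead_coef P -> P != 0.
Proof. by apply: contraTneq => ->; rewrite lead_coef0 ltxx. Qed.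

Lemma size_mul_lead_coef_gt0 P Q : 0 < lead_coef P -> 0 < lead_coef Q ->
  (size (P * Q))%:Z = (size P)%:Z + (size Q)%:Z - 1.
Proof.
move=> /lead_coef_gt0_neq0 nzP /lead_coef_gt0_neq0 nzQ.
by rewrite size_mul // -subn1 subzn ?PoszD // addn_gt0 size_poly_gt0 nzP.
Qed.

Lemma lead_coef_sizeD_gt0 P Q : 0 < lead_coef P -> 0 < lead_coef Q ->
  0 < lead_coef (P + Q) /\ (size (P + Q))%:Z = Num.max (size P)%:Z (size Q)%:Z.
Proof.
move=> gt0P gt0Q; case: (ltngtP (size P) (size Q)) => [ltPQ|ltQP|eqPQ].
- by rewrite lead_coefDr // addrC size_polyDl //; split=> //; lia.
- by rewrite lead_coefDl // size_polyDl //; split=> //; lia.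
have coefPQ : (P + Q)`_(size P).-1 = lead_coef P + lead_coef Q.
  by rewrite coefD /lead_coef eqPQ.
have gt0PQ : 0 < (P + Q)`_(size P).-1 by rewrite coefPQ addr_gt0.
have sizePQ : size (P + Q) = size P.
  apply/anti_leq/andP; split; first by rewrite -[X in (_ <= X)%N]maxnn {2}eqPQ size_polyD.
  move: gt0PQ; apply: contraTT; rewrite -ltnNge => ltPQ.
  by rewrite nth_default ?ltxx // -ltnS prednK // (leq_ltn_trans _ ltPQ).
by rewrite /lead_coef sizePQ coefPQ addr_gt0 // eqPQ maxxx.
Qed.
End PositivePolynomials.

Section TropicalDegree.
Variables (R : numDomainType) (n : nat) (k : 'I_n).

Definition spec_poly (p : {mpoly R[n]}) : {poly R} :=
  mmap polyC (fun i => if i == k then 'X else 1) p.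

(* Positive leading coefficients rule out cancellation, so the degree of a sum
   is the maximum of the degrees: [trop_deg] is a morphism to (max, +). *)
Definition trop_deg (z : {fraction {mpoly R[n]}}) (d : int) : Prop :=
  exists p q, [/\ z = tofrac p / tofrac q, 0 < lead_coef (spec_poly p),
    0 < lead_coef (spec_poly q) & d = (size (spec_poly p))%:Z - (size (spec_poly q))%:Z].

Lemma spec_polyM p q : spec_poly (p * q) = spec_poly p * spec_poly q.
Proof. exact: rmorphM. Qed.

Lemma spec_polyD p q : spec_poly (p + q) = spec_poly p + spec_poly q.
Proof. exact: rmorphD. Qed.

Lemma tofrac_spec_neq0 p : 0 < lead_coef (spec_poly p) -> tofrac p != 0.
Proof.
rewrite tofrac_eq0; apply: contraTneq => ->.
by rewrite /spec_poly rmorph0 lead_coef0 ltxx.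
Qed.

Lemma trop_deg_uniq z d e : trop_deg z d -> trop_deg z e -> d = e.
Proof.
move=> [p [q [-> gt0p gt0q ->]]] [p' [q' [eqz gt0p' gt0q' ->]]].
have : tofrac (p * q') = tofrac (p' * q) :> {fraction {mpoly R[n]}}.
  by rewrite !tofracM -[tofrac p](divfK (tofrac_spec_neq0 gt0q)) eqz mulrAC divfK //
    tofrac_spec_neq0.
move/eqP; rewrite tofrac_eq => /eqP/(congr1 (fun r => (size (spec_poly r))%:Z)).
by rewrite !spec_polyM !size_mul_lead_coef_gt0 //; lia.
Qed.

Lemma trop_deg_var i : trop_deg (tofrac 'X_i) (i == k).
Proof.
exists 'X_i, 1; rewrite tofrac1 divr1 /spec_poly rmorph1 mmapX mmap1U lead_coef1 size_poly1.
by case: (i == k); rewrite ?lead_coefX ?size_polyX ?lead_coef1 ?size_poly1.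
Qed.

Lemma trop_degM z w d e : trop_deg z d -> trop_deg w e -> trop_deg (z * w) (d + e).
Proof.
move=> [p [q [-> gt0p gt0q ->]]] [p' [q' [-> gt0p' gt0q' ->]]].
exists (p * p'), (q * q'); rewrite !spec_polyM !lead_coefM !mulr_gt0 //.
by rewrite !tofracM mulf_div !size_mul_lead_coef_gt0 //; split => //; lia.
Qed.

Lemma trop_degV z d : trop_deg z d -> trop_deg z^-1 (- d).
Proof. by move=> [p [q [-> gt0p gt0q ->]]]; exists q, p; rewrite invf_div opprB. Qed.

Lemma trop_degX z d m : trop_deg z d -> trop_deg (z ^+ m) (m%:Z * d).
Proof.
move=> zd; elim: m => [|m IHm].
  by exists 1, 1; rewrite tofrac1 divr1 /spec_poly rmorph1 lead_coef1 mul0r subrr.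
by rewrite exprS intS mulrDl mul1r; apply: trop_degM.
Qed.

Lemma trop_degXz z d m : 0 <= m -> trop_deg z d -> trop_deg (z ^+ `|m|%N) (m * d).
Proof. by move=> m_ge0 /(trop_degX `|m|%N); rewrite gez0_abs. Qed.

Lemma trop_degD z w d e : trop_deg z d -> trop_deg w e -> trop_deg (z + w) (Num.max d e).
Proof.
move=> [p [q [-> gt0p gt0q ->]]] [p' [q' [-> gt0p' gt0q' ->]]].
exists (p * q' + p' * q), (q * q').
have gt0pq' : 0 < lead_coef (spec_poly p * spec_poly q') by rewrite lead_coefM mulr_gt0.
have gt0p'q : 0 < lead_coef (spec_poly p' * spec_poly q) by rewrite lead_coefM mulr_gt0.
have [gt0D sizeD] := lead_coef_sizeD_gt0 gt0pq' gt0p'q.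
rewrite spec_polyD !spec_polyM sizeD lead_coefM mulr_gt0 //.
rewrite addf_div ?tofrac_spec_neq0 // tofracD !tofracM; split => //.
by rewrite !size_mul_lead_coef_gt0 //; lia.
Qed.
End TropicalDegree.

Definition i0 : 'I_3 := @Ordinal 3 0 isT.
Definition i1 : 'I_3 := @Ordinal 3 1 isT.
Definition i2 : 'I_3 := @Ordinal 3 2 isT.

Lemma ord3P (P : 'I_3 -> Prop) : P i0 -> P i1 -> P i2 -> forall i, P i.
Proof.
by move=> P0 P1 P2 [[|[|[|//]]] lti]; [move: P0 | move: P1 | move: P2];
  congr P; apply: val_inj.
Qed.

Lemma ord3E :
  (ordS i0 = i1) * (ordS i1 = i2) * (ordS i2 = i0) *
  (ord_pred i0 = i2) * (ord_pred i1 = i0) * (ord_pred i2 = i1).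
Proof. by do !split; apply: val_inj. Qed.

Lemma big_ord3 (T : Type) (idx : T) (op : Monoid.law idx) (P : pred 'I_3) (F : 'I_3 -> T) :
  \big[op/idx]_(i < 3 | P i) F i =
  op (op (if P i0 then F i0 else idx) (if P i1 then F i1 else idx))
     (if P i2 then F i2 else idx).
Proof.
rewrite big_mkcond !big_ord_recl big_ord0 Monoid.mulm1 Monoid.mulmA.
by congr (op (op (if P _ then F _ else _) (if P _ then F _ else _)) (if P _ then F _ else _));
  apply: val_inj.
Qed.

Definition cyc_mat (w : 'I_3 -> int) : exmat := fun i j =>
  match nat_of_ord i, nat_of_ord j with
  | 0, 1 => w i2 | 1, 2 => w i0 | 2, 0 => w i1
  | 1, 0 => - w i2 | 2, 1 => - w i0 | 0, 2 => - w i1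
  | _, _ => 0 end.

Definition signed (b : bool) (B : exmat) : exmat :=
  fun i j => if b then B i j else - B i j.

Section CyclicMatrix.
Variables (w : 'I_3 -> int) (b : bool) (k : 'I_3).
Hypothesis w_gt0 : forall i, 0 < w i.

Let w_lt0F i : (w i < 0) = false. Proof. by rewrite ltNge ltW. Qed.
Let oppw_gt0F i : (0 < - w i) = false. Proof. by rewrite oppr_gt0 w_lt0F. Qed.
Let oppw_lt0 i : (- w i < 0). Proof. by rewrite oppr_lt0. Qed.

Lemma mut_mat_cyc :
  mut_mat k (signed b (cyc_mat w)) =2
  signed (~~ b) (cyc_mat [eta w with k |-> w (ordS k) * w (ord_pred k) - w k]).
Proof.
have w0 := w_gt0 i0; have w1 := w_gt0 i1; have w2 := w_gt0 i2.
move: k; apply: ord3P; apply: ord3P; apply: ord3P;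
  rewrite /mut_mat /signed /cyc_mat /=; case: b => /=;
  rewrite ?opprK ?sgzN ?gtr0_sgz // ?mulNr ?mulrN ?opprK ?mul1r //;
  rewrite ?ord3E; nia.
Qed.

Lemma exchange_binomial_cyc (T : comRingType) (B : exmat) (x : 'I_3 -> T) :
  B =2 signed b (cyc_mat w) ->
  \prod_(i < 3 | 0 < B i k) x i ^+ `|B i k|%N + \prod_(i < 3 | B i k < 0) x i ^+ `|B i k|%N
  = x (ordS k) ^+ `|w (ord_pred k)|%N + x (ord_pred k) ^+ `|w (ordS k)|%N.
Proof.
move=> eqB; rewrite !big_ord3 !eqB; move: k; apply: ord3P;
  rewrite /signed /cyc_mat /=; case: b;
  rewrite /= ?opprK ?ltxx ?w_gt0 ?w_lt0F ?oppw_gt0F ?oppw_lt0 ?abszN ?ord3E ?mul1r ?mulr1 //;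
  exact: addrC.
Qed.

Lemma exchange_degree_cyc (B : exmat) (g : 'I_3 -> int) :
  B =2 signed b (cyc_mat w) -> g =1 w ->
  \sum_(i < 3 | 0 < B i k) B i k * g i = w (ordS k) * w (ord_pred k).
Proof.
move=> eqB eqg; rewrite !big_ord3 !eqB !eqg; move: k; apply: ord3P;
  rewrite /signed /cyc_mat /=; case: b;
  rewrite /= ?opprK ?ltxx ?w_gt0 ?w_lt0F ?oppw_gt0F ?oppw_lt0 ?ord3E ?add0r ?addr0 //;
  exact: mulrC.
Qed.
End CyclicMatrix.

Lemma mut_mat_ext k (B B' : exmat) : B =2 B' -> mut_mat k B =2 mut_mat k B'.
Proof. by move=> eqB i j; rewrite /mut_mat !eqB. Qed.

Definition cyclic_seed (s : gseed) (b : bool) (w t : 'I_3 -> int) : Prop :=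
  [/\ gs_B s =2 signed b (cyc_mat w), gs_g s =1 w &
      forall i, trop_deg i0 (gs_x s i) (t i)].

Lemma cyclic_seed_ext s b w t w' t' :
  w =1 w' -> t =1 t' -> cyclic_seed s b w t -> cyclic_seed s b w' t'.
Proof.
move=> eqw eqt [eqB eqg xt]; split=> [i j|i|i]; rewrite -?eqt //.
  by rewrite eqB /signed /cyc_mat !eqw.
by rewrite eqg eqw.
Qed.

Lemma cyclic_seed_mut s b w t k : (forall i, 0 < w i) -> cyclic_seed s b w t ->
  cyclic_seed (mut_seed k s) (~~ b)
    [eta w with k |-> w (ordS k) * w (ord_pred k) - w k]
    [eta t with k |->
       Num.max (w (ord_pred k) * t (ordS k)) (w (ordS k) * t (ord_pred k)) - t k].
Proof.
move=> w_gt0 [eqB eqg xt]; split=> [i j|i|i] /=.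
- by rewrite (mut_mat_ext k eqB) mut_mat_cyc.
- by case: (i == k); rewrite ?eqg // (exchange_degree_cyc k w_gt0 eqB eqg) addrC.
case: (i == k); last exact: xt.
rewrite (exchange_binomial_cyc k w_gt0 _ eqB); apply: trop_degM (trop_degV (xt k)).
by apply: trop_degD; apply: trop_degXz; rewrite ?ltW.
Qed.

Definition vec3 (x y z : int) : 'I_3 -> int :=
  fun i => match nat_of_ord i with 0 => x | 1 => y | _ => z end.

Lemma cyclic_seed0 a : cyclic_seed (seed0 a) true (vec3 a 2 a) (vec3 1 0 0).
Proof. by split; do ?apply: ord3P => //; exact: trop_deg_var. Qed.

Lemma mut_seq_cat ks ks' s : mut_seq (ks ++ ks') s = mut_seq ks' (mut_seq ks s).
Proof. exact: foldl_cat. Qed.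

Definition loop_moves (n : nat) : seq 'I_3 := flatten (nseq n [:: i2; i0]).

Lemma cyclic_seed_loop a n : (0 < a)%N ->
  cyclic_seed (mut_seq (loop_moves n) (seed0 a)) true
    (vec3 a 2 a) (vec3 (2 * n%:Z + 1) 0 (2 * n%:Z)).
Proof.
move=> a_gt0; have w_gt0 : forall i, 0 < vec3 a 2 a i by apply: ord3P; rewrite /= ?ltz_nat.
elim: n => [|n IHn]; first exact: cyclic_seed0.
rewrite /loop_moves -[n.+1]addn1 nseqD flatten_cat mut_seq_cat /=.
have step2 : cyclic_seed (mut_seed i2 (mut_seq (loop_moves n) (seed0 a))) false
    (vec3 a 2 a) (vec3 (2 * n%:Z + 1) 0 (2 * n%:Z + 2)).
  by apply: cyclic_seed_ext (cyclic_seed_mut i2 w_gt0 IHn); apply: ord3P;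
    rewrite /= ?ord3E /vec3 /=; lia.
apply: cyclic_seed_ext (cyclic_seed_mut i0 w_gt0 step2); apply: ord3P;
  rewrite /= ?ord3E /vec3 /=; lia.
Qed.

(* [lucas a 2 a] and [lucas a 0 1] are the Lucas sequences V_j(a,1), U_j(a,1). *)
Fixpoint lucas (a x0 x1 : int) (j : nat) : int :=
  match j with
  | 0 => x0
  | 1 => x1
  | (j'.+1 as j1).+1 => a * lucas a x0 x1 j1 - lucas a x0 x1 j'
  end.

Arguments lucas : simpl nomatch.

Lemma lucasSS a x0 x1 j : lucas a x0 x1 j.+2 = a * lucas a x0 x1 j.+1 - lucas a x0 x1 j.
Proof. by []. Qed.

Lemma lucas_incr a x0 x1 j : 2 <= a -> 0 <= x0 -> x0 < x1 ->
  0 <= lucas a x0 x1 j < lucas a x0 x1 j.+1.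
Proof.
move=> a_ge2 x0_ge0 lt_x01; elim: j => [|j /andP[ge0 lt]]; first exact/andP.
by rewrite lucasSS; apply/andP; split; nia.
Qed.

Lemma lucasV_lucasU a j : lucas a 2 a j.+1 + 2 * lucas a 0 1 j = a * lucas a 0 1 j.+1.
Proof.
suff [] : lucas a 2 a j.+1 + 2 * lucas a 0 1 j = a * lucas a 0 1 j.+1 /\
          lucas a 2 a j.+2 + 2 * lucas a 0 1 j.+1 = a * lucas a 0 1 j.+2 by [].
elim: j => [|j [IH1 IH2]]; first by rewrite /=; split; lia.
split=> //; rewrite (lucasSS a 2 a j.+1) (lucasSS a 0 1 j.+1).
have := lucasSS a 0 1 j; nia.
Qed.

Section LucasSequences.
Variable a : nat.
Hypothesis a_ge3 : (3 <= a)%N.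
Local Notation V := (lucas a 2 a).
Local Notation U := (lucas a 0 1).

Let a_ge2 : 2 <= a%:Z. Proof. by rewrite lez_nat ltnW. Qed.
Let lt2a : 2 < a%:Z. Proof. by rewrite ltz_nat. Qed.

Lemma lucasV_gt0 j : 0 < V j.
Proof.
case: j => [//|j]; have /andP[ge0 lt] := @lucas_incr a 2 a j a_ge2 isT lt2a.
exact: le_lt_trans lt.
Qed.

Lemma lucasV_inj : injective V.
Proof.
apply/inc_inj/le_mono/Order.NatMonotonyTheory.homo_ltn_lt => j.
by case/andP: (@lucas_incr a 2 a j a_ge2 isT lt2a).
Qed.

Lemma lucasU_ge0 j : 0 <= U j.
Proof. by case/andP: (lucas_incr j a_ge2 (lexx 0) ltr01). Qed.

Lemma lucasU_gt0 j : 0 < U j.+1.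
Proof. by case/andP: (lucas_incr j a_ge2 (lexx 0) ltr01) => /le_lt_trans; apply. Qed.

Lemma lucasV_le j : V j.+1 <= a%:Z * U j.+1.
Proof. by rewrite -lucasV_lucasU lerDl mulr_ge0 ?lucasU_ge0. Qed.
End LucasSequences.

Definition zigzag_moves (j : nat) : seq 'I_3 := mkseq (fun i => if odd i then i0 else i1) j.

Definition zigzag_var (a n j : nat) : QX :=
  gs_x (mut_seq (loop_moves n ++ zigzag_moves j) (seed0 a)) (if odd j then i1 else i0).

Section Zigzag.
Variables a n : nat.
Hypothesis a_ge3 : (3 <= a)%N.
Local Notation V := (lucas a 2 a).
Local Notation U := (lucas a 0 1).
Local Notation c j := ((2 * n%:Z + 1) * U j).

Lemma cyclic_seed_zigzag j :
  cyclic_seed (mut_seq (loop_moves n ++ zigzag_moves j) (seed0 a)) (~~ odd j)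
    (if odd j then vec3 (V j) (V j.+1) a else vec3 (V j.+1) (V j) a)
    (if odd j then vec3 (c j) (c j.+1) (2 * n%:Z) else vec3 (c j.+1) (c j) (2 * n%:Z)).
Proof.
have a_gt0 : (0 < a)%N by apply: leq_trans a_ge3.
elim: j => [|j IHj].
  by rewrite cats0; apply: cyclic_seed_ext (cyclic_seed_loop n a_gt0);
    apply: ord3P; rewrite /vec3 /=; lia.
rewrite /zigzag_moves mkseqS -cats1 catA mut_seq_cat -/(zigzag_moves j) /=.
have := lucasV_le a_ge3 j; have := lucasU_ge0 a_ge3 j.+1.
have w_gt0 i : 0 < (if odd j then vec3 (V j) (V j.+1) a else vec3 (V j.+1) (V j) a) i.
  by move: i; apply: ord3P; case: (odd j); rewrite /vec3 /= ?lucasV_gt0 ?ltz_nat.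
move: IHj w_gt0; case: (odd j) => /= IHj w_gt0 V_le U_ge0.
- apply: cyclic_seed_ext (cyclic_seed_mut i0 w_gt0 IHj);
    apply: ord3P; rewrite /= ?ord3E /vec3 /=; nia.
- apply: cyclic_seed_ext (cyclic_seed_mut i1 w_gt0 IHj);
    apply: ord3P; rewrite /= ?ord3E /vec3 /=; nia.
Qed.

Lemma clvar_zigzag_var j : clvar_of_deg (seed0 a) (zigzag_var a n j) (V j.+1).
Proof.
have [_ g_eq _] := cyclic_seed_zigzag j.
exists (loop_moves n ++ zigzag_moves j), (if odd j then i1 else i0).
by split=> //; rewrite g_eq; case: (odd j).
Qed.

Lemma trop_deg_zigzag_var j : trop_deg i0 (zigzag_var a n j) (c j.+1).
Proof.
have [_ _ x_deg] := cyclic_seed_zigzag j.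
by move: (x_deg (if odd j then i1 else i0)); rewrite /zigzag_var; case: (odd j).
Qed.
End Zigzag.

Lemma zigzag_var_inj (a j : nat) : (3 <= a)%N -> injective (zigzag_var a ^~ j).
Proof.
move=> a_ge3 n n' eq_var; have := trop_deg_zigzag_var n a_ge3 j.
rewrite eq_var => /trop_deg_uniq /(_ (trop_deg_zigzag_var n' a_ge3 j)).
by move/(mulIf (lt0r_neq0 (lucasU_gt0 a_ge3 j))); lia.
Qed.

Lemma inj_nat_notin (T : eqType) (f : nat -> T) (s : seq T) :
  injective f -> exists n, f n \notin s.
Proof.
move=> f_inj.
suff /hasP[n _ fn_notin] : has (fun n => f n \notin s) (iota 0 (size s).+1) by exists n.
apply: contraT => /hasPn /= all_in.
have : {subset map f (iota 0 (size s).+1) <= s}.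
  by move=> _ /mapP[m m_in ->]; move: (all_in m m_in); rewrite negbK.
move/(uniq_leq_size (_ : uniq _)); rewrite map_inj_uniq ?iota_uniq //.
by rewrite size_map size_iota ltnn => /(_ isT).
Qed.

Theorem mainTheorem18 (a : nat) (ha : (3 <= a)%N) :
  forall ds : seq int, exists d : int, d \notin ds /\
    forall zs : seq QX, exists z : QX, z \notin zs /\ clvar_of_deg (seed0 a) z d.
Proof.
move=> ds.
have [j Vj_notin] := inj_nat_notin ds (inj_comp (lucasV_inj ha) succn_inj).
exists (lucas a 2 a j.+1); split=> // zs.
have [n zn_notin] := inj_nat_notin zs (zigzag_var_inj (j := j) ha).
by exists (zigzag_var a n j); split=> //; apply: clvar_zigzag_var.
Qed.
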